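(* Let $2\le m\le n$. Then for every subgroup $H$ of $\mathrm{Sp}(n,1)$ which is conjugate in $\mathrm{Sp}(n,1)$ to $I_{n-m}\oplus\mathrm{SU}(m,1)$, the set of traces of the elements of $H$ is not contained in $\mathbb R$.
   Context: $\mathbb H$ denotes the quaternions. $\mathrm{Sp}(n,1)=\{A\in\mathrm{GL}(n+1,\mathbb H): A^*I_{n,1}A=I_{n,1}\}$ with $A^*$ the conjugate transpose and $I_{n,1}=\mathrm{diag}(1,\dots,1,-1)$. $\mathrm{SU}(m,1)$ is the group of complex $(m+1)\times(m+1)$ matrices of determinant $1$ preserving $I_{m,1}$. $I_{n-m}\oplus\mathrm{SU}(m,1)$ is the subgroup of block diagonal matrices with the $(n-m)\times(n-m)$ identity in the upper left block and an element of $\mathrm{SU}(m,1)$ in the lower right block. The trace of a quaternionic matrix is the sum of its diagonal entries. *)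

From HB Require Import structures.
From mathcomp Require Import all_boot all_order all_algebra.
From mathcomp Require Import complex.
From mathcomp Require Import reals.
From mathcomp Require Import ring.
Set Implicit Arguments. Unset Strict Implicit. Unset Printing Implicit Defensive.
Import Order.TTheory GRing.Theory Num.Theory.
Local Open Scope ring_scope.

Section Quaternions.
Variable R : comNzRingType.

(* q = q0 + q1 i + q2 j + q3 k *)
Record quat := Quat { q0 : R; q1 : R; q2 : R; q3 : R }.

Definition quat_to (q : quat) := (q0 q, q1 q, q2 q, q3 q).
Definition quat_of (x : R * R * R * R) := let: (a, b, c, d) := x in Quat a b c d.
Lemma quat_toK : cancel quat_to quat_of. Proof. by case. Qed.

HB.instance Definition _ := Equality.copy quat (can_type quat_toK).
HB.instance Definition _ := Choice.copy quat (can_type quat_toK).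

Definition qzero := Quat 0 0 0 0.
Definition qone := Quat 1 0 0 0.
Definition qadd (x y : quat) :=
  Quat (q0 x + q0 y) (q1 x + q1 y) (q2 x + q2 y) (q3 x + q3 y).
Definition qopp (x : quat) := Quat (- q0 x) (- q1 x) (- q2 x) (- q3 x).
(* Hamilton product: i^2 = j^2 = k^2 = ijk = -1 *)
Definition qmul (x y : quat) :=
  Quat (q0 x * q0 y - q1 x * q1 y - q2 x * q2 y - q3 x * q3 y)
       (q0 x * q1 y + q1 x * q0 y + q2 x * q3 y - q3 x * q2 y)
       (q0 x * q2 y - q1 x * q3 y + q2 x * q0 y + q3 x * q1 y)
       (q0 x * q3 y + q1 x * q2 y - q2 x * q1 y + q3 x * q0 y).

Lemma qaddA : associative qadd.
Proof. by case=> ? ? ? ? [] ? ? ? ? [] ? ? ? ?; rewrite /qadd /qzero /=; congr Quat; ring. Qed.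
Lemma qaddC : commutative qadd.
Proof. by case=> ? ? ? ? [] ? ? ? ?; rewrite /qadd /qzero /=; congr Quat; ring. Qed.
Lemma qadd0 : left_id qzero qadd.
Proof. by case=> ? ? ? ?; rewrite /qadd /qzero /=; congr Quat; ring. Qed.
Lemma qaddN : left_inverse qzero qopp qadd.
Proof. by case=> ? ? ? ?; rewrite /qadd /qzero /=; congr Quat; ring. Qed.

HB.instance Definition _ := GRing.isZmodule.Build quat qaddA qaddC qadd0 qaddN.

Lemma qmulA : associative qmul.
Proof. by case=> ? ? ? ? [] ? ? ? ? [] ? ? ? ?; rewrite /qmul /qone /=; congr Quat; ring. Qed.
Lemma qmul1 : left_id qone qmul.
Proof. by case=> ? ? ? ?; rewrite /qmul /qone /=; congr Quat; ring. Qed.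
Lemma qmulr1 : right_id qone qmul.
Proof. by case=> ? ? ? ?; rewrite /qmul /qone /=; congr Quat; ring. Qed.
Lemma qmulDl : left_distributive qmul qadd.
Proof. by case=> ? ? ? ? [] ? ? ? ? [] ? ? ? ?; rewrite /qmul /qadd /=; congr Quat; ring. Qed.
Lemma qmulDr : right_distributive qmul qadd.
Proof. by case=> ? ? ? ? [] ? ? ? ? [] ? ? ? ?; rewrite /qmul /qadd /=; congr Quat; ring. Qed.
Lemma qone_neq0 : qone != qzero.
Proof. by apply/eqP => -[] /eqP; rewrite oner_eq0. Qed.

HB.instance Definition _ := GRing.Zmodule_isNzRing.Build quat
  qmulA qmul1 qmulr1 qmulDl qmulDr qone_neq0.

Definition qconj (x : quat) := Quat (q0 x) (- q1 x) (- q2 x) (- q3 x).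

Definition qreal (x : quat) : Prop := q1 x = 0 /\ q2 x = 0 /\ q3 x = 0.

End Quaternions.

Arguments Quat {R}.

Definition c2q (R : comNzRingType) (z : R[i]) : quat R :=
  let: Complex a b := z in Quat a b 0 0.

Definition Iform (T : pzRingType) (n : nat) : 'M[T]_(n.+1) :=
  \matrix_(i, j) if i == j then (if i == ord_max then -1 else 1) else 0.

Definition qadj (R : comNzRingType) (k : nat) (A : 'M[quat R]_k) : 'M[quat R]_k :=
  \matrix_(i, j) qconj (A j i).
Definition cadj (R : comNzRingType) (k : nat) (A : 'M[R[i]]_k) : 'M[R[i]]_k :=
  \matrix_(i, j) conjc (A j i).

Definition in_Sp (R : comNzRingType) (n : nat) (A : 'M[quat R]_(n.+1)) : Prop :=
  (exists B : 'M[quat R]_(n.+1), A *m B = 1%:M /\ B *m A = 1%:M)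
  /\ qadj A *m Iform (quat R) n *m A = Iform (quat R) n.

Definition in_SU (R : rcfType) (m : nat) (B : 'M[R[i]]_(m.+1)) : Prop :=
  \det B = 1 /\ cadj B *m Iform R[i] m *m B = Iform R[i] m.

Definition blockI (R : comNzRingType) (n m : nat) (B : 'M[R[i]]_(m.+1))
  : 'M[quat R]_(n.+1) :=
  \matrix_(i, j)
    if (i < n - m)%N then (if i == j then 1 else 0)
    else if (j < n - m)%N then 0
    else c2q (B (inord (i - (n - m))) (inord (j - (n - m)))).

(* In SU(m,1) take the diagonal matrices diag(a, b, 1, ..., 1, c) with
   (a, b, c) = (-1, i, i), (-1, -i, -i), (1, i, -i), (1, -i, i); their
   combination with signs + - - + is 4i E_mm, and the identity blocks of the
   embedding into Sp(n,1) cancel as well.  For g in Sp(n,1) we have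
   g^-1 = I g^* I, so the same combination of traces over
   g (I_{n-m} (+) SU(m,1)) g^-1 equals -4 sum_k e_k a_k i conj(a_k), where a
   is the last column of g and e = diag(I_{n,1}).  If all traces were real
   this purely imaginary quaternion would vanish.  Conjugating it by p = a_n
   and reading off the i-component gives
   |p|^4 <= |p|^2 sum_{k<n} |a_k|^2 = |p|^2 (|p|^2 - 1), the last step being
   the (n,n) entry of g^* I g = I: a contradiction. *)
From HB Require Import structures.
From mathcomp Require Import all_boot all_order all_algebra.
From mathcomp Require Import complex reals ring lra zify.
Set Implicit Arguments. Unset Strict Implicit. Unset Printing Implicit Defensive.
Import Order.TTheory GRing.Theory Num.Theory.
Local Open Scope ring_scope.

Definition sgn (T : pzRingType) (n : nat) (k : 'I_n.+1) : T :=
  if k == ord_max then -1 else 1.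
Arguments sgn {T n}.

Lemma sgn_max (T : pzRingType) n : sgn (@ord_max n) = - 1 :> T.
Proof. by rewrite /sgn eqxx. Qed.

Lemma sgn_neq_max (T : pzRingType) n (k : 'I_n.+1) : k != ord_max -> sgn k = 1 :> T.
Proof. by rewrite /sgn => /negbTE ->. Qed.

Lemma Iform_diag (T : pzRingType) n : Iform T n = diag_mx (\row_k sgn k).
Proof. by apply/matrixP => i j; rewrite !mxE /sgn eq_sym; case: eqP => // ->. Qed.

Lemma Iform_mul_self (T : pzRingType) n : Iform T n *m Iform T n = 1%:M.
Proof.
rewrite Iform_diag mulmx_diag; apply/matrixP => i j; rewrite !mxE /sgn.
by case: (i == ord_max); rewrite ?mulrNN mulr1.
Qed.

Definition corner (V : zmodType) n (y : V) : 'M[V]_n.+1 :=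
  \matrix_(i, j) if (i == ord_max) && (j == ord_max) then y else 0.

Lemma mxtrace_mul_corner (T : pzRingType) n (g gi : 'M[T]_n.+1) (y : T) :
  \tr (g *m corner n y *m gi) = \sum_k g k ord_max * y * gi ord_max k.
Proof.
apply: eq_bigr => k _; rewrite mxE (bigD1 ord_max) //= big1 ?addr0 => [|l hl].
  congr (_ * _); rewrite mxE (bigD1 ord_max) //= big1 ?addr0 ?mxE ?eqxx // => l hl.
  by rewrite mxE (negbTE hl) mulr0.
by rewrite mxE big1 ?mul0r // => j _; rewrite mxE (negbTE hl) andbF mulr0.
Qed.

Section QuaternionAlgebra.
Variable R : comNzRingType.
Notation H := (quat R).

Lemma q0_is_zmod_morphism : zmod_morphism (@q0 R). Proof. by []. Qed.
Lemma q1_is_zmod_morphism : zmod_morphism (@q1 R). Proof. by []. Qed.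
Lemma q2_is_zmod_morphism : zmod_morphism (@q2 R). Proof. by []. Qed.
Lemma q3_is_zmod_morphism : zmod_morphism (@q3 R). Proof. by []. Qed.
HB.instance Definition _ := GRing.isZmodMorphism.Build H R (@q0 R) q0_is_zmod_morphism.
HB.instance Definition _ := GRing.isZmodMorphism.Build H R (@q1 R) q1_is_zmod_morphism.
HB.instance Definition _ := GRing.isZmodMorphism.Build H R (@q2 R) q2_is_zmod_morphism.
HB.instance Definition _ := GRing.isZmodMorphism.Build H R (@q3 R) q3_is_zmod_morphism.

Definition qi : H := Quat 0 1 0 0.
Definition qnorm2 (x : H) := q0 x ^+ 2 + q1 x ^+ 2 + q2 x ^+ 2 + q3 x ^+ 2.
Definition hopf (x : H) := x * qi * qconj x.

Lemma qmulE (x y : H) : x * y = qmul x y. Proof. by []. Qed.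

Lemma sgn_quat n (k : 'I_n.+1) : sgn k = Quat (sgn k) 0 0 0 :> H.
Proof. by rewrite /sgn; case: eqP => _ //; congr Quat; rewrite /= oppr0. Qed.

Lemma qrealB (x y : H) : qreal x -> qreal y -> qreal (x - y).
Proof.
move=> [hx1 [hx2 hx3]] [hy1 [hy2 hy3]].
by rewrite /qreal !raddfB /= hx1 hx2 hx3 hy1 hy2 hy3 subrr; do !split.
Qed.

Lemma qrealN (x : H) : qreal x -> qreal (- x).
Proof. by move=> [hx1 [hx2 hx3]]; rewrite /qreal !raddfN /= hx1 hx2 hx3 oppr0. Qed.

Lemma qreal_q0_eq0 (x : H) : qreal x -> q0 x = 0 -> x = 0.
Proof. by case: x => ? ? ? ? [/= -> [-> ->]] /= ->. Qed.

Lemma q0_hopf_sgn n (k : 'I_n.+1) (x : H) : q0 (hopf x * sgn k) = 0.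
Proof. by case: x => ? ? ? ?; rewrite sgn_quat /hopf !qmulE /=; ring. Qed.

Lemma q0_conj_sgn_mul n (k : 'I_n.+1) (a : H) :
  q0 (qconj a * sgn k * a) = sgn k * qnorm2 a.
Proof. by case: a => ? ? ? ?; rewrite sgn_quat /qnorm2 !qmulE /=; ring. Qed.

Lemma q1_conj_hopf_sgn n (k : 'I_n.+1) (p a : H) :
  q1 (qconj p * (hopf a * sgn k) * p) = sgn k * q1 (hopf (qconj p * a)).
Proof. by case: p => ? ? ? ?; case: a => ? ? ? ?; rewrite sgn_quat /hopf !qmulE /=; ring. Qed.

Lemma q1_hopf_conj_mul_self (p : H) : q1 (hopf (qconj p * p)) = qnorm2 p ^+ 2.
Proof. by case: p => ? ? ? ?; rewrite /hopf /qnorm2 !qmulE /=; ring. Qed.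

Lemma qnorm2M (x y : H) : qnorm2 (x * y) = qnorm2 x * qnorm2 y.
Proof. by case: x => ? ? ? ?; case: y => ? ? ? ?; rewrite /qnorm2 qmulE /=; ring. Qed.

Lemma qnorm2_conj (x : H) : qnorm2 (qconj x) = qnorm2 x.
Proof. by case: x => ? ? ? ?; rewrite /qnorm2 /=; ring. Qed.

End QuaternionAlgebra.

Lemma qreal_mulrnK (R : numDomainType) (x : quat R) k : qreal (x *+ k.+1) -> qreal x.
Proof.
rewrite /qreal !raddfMn /= => -[/eqP + [/eqP + /eqP]].
by rewrite !mulrn_eq0 /= => /eqP -> /eqP -> /eqP ->.
Qed.

Section HopfSignedSum.
Variable R : realDomainType.
Notation H := (quat R).

Lemma qnorm2_ge0 (x : H) : 0 <= qnorm2 x.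
Proof. by rewrite /qnorm2 !addr_ge0 ?sqr_ge0. Qed.

Lemma q1_hopf_le_qnorm2 (x : H) : q1 (hopf x) <= qnorm2 x.
Proof.
have -> : qnorm2 x = q1 (hopf x) + 2 * (q2 x ^+ 2 + q3 x ^+ 2).
  by case: x => ? ? ? ?; rewrite /hopf /qnorm2 !qmulE /=; ring.
by rewrite lerDl mulr_ge0 ?addr_ge0 ?sqr_ge0.
Qed.

Lemma hopf_signed_sum_not_real n (a : 'I_n.+1 -> H) :
  \sum_k qconj (a k) * sgn k * a k = -1 -> ~ qreal (\sum_k hopf (a k) * sgn k).
Proof.
move=> hnorm hreal; set p := a ord_max.
have hopf_sum0 : \sum_k hopf (a k) * sgn k = 0.
  by apply: qreal_q0_eq0 => //; rewrite raddf_sum big1 // => k _; exact: q0_hopf_sgn.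
have hq1 : \sum_k sgn k * q1 (hopf (qconj p * a k)) = 0.
  transitivity (q1 (qconj p * (\sum_k hopf (a k) * sgn k) * p)).
    rewrite mulr_sumr mulr_suml raddf_sum.
    by apply: eq_bigr => k _; rewrite -q1_conj_hopf_sgn.
  by rewrite hopf_sum0 mulr0 mul0r raddf0.
have hq0 : \sum_k sgn k * qnorm2 (a k) = -1.
  have := congr1 (@q0 R) hnorm; rewrite raddf_sum /= => <-.
  by apply: eq_bigr => k _; rewrite -q0_conj_sgn_mul.
rewrite (bigD1 ord_max) // sgn_max -/p q1_hopf_conj_mul_self in hq1.
rewrite (bigD1 ord_max) // sgn_max -/p in hq0.
set S := \sum_(k | k != ord_max) _ in hq0.
set X := \sum_(k | k != ord_max) _ in hq1.
rewrite /= in hq0 hq1.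
have S_ge0 : 0 <= S.
  by apply: sumr_ge0 => k hk; rewrite sgn_neq_max // mul1r qnorm2_ge0.
have X_le : X <= qnorm2 p * S.
  rewrite mulr_sumr; apply: ler_sum => k hk; rewrite !sgn_neq_max // !mul1r.
  by rewrite -qnorm2_conj -qnorm2M q1_hopf_le_qnorm2.
clearbody p S X; clear -hq0 hq1 X_le S_ge0; nra.
Qed.

End HopfSignedSum.


Section SpecialUnitary.
Variable R : rcfType.
Notation C := R[i].

Lemma cadj_diag m (d : 'rV[C]_m) : cadj (diag_mx d) = diag_mx (map_mx conjc d).
Proof.
apply/matrixP => i j; rewrite !mxE eq_sym.
by case: eqP => [->|_]; rewrite ?mulr1n ?mulr0n ?rmorph0.
Qed.

Lemma diag_in_SU m (d : 'rV[C]_m.+1) :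
  \prod_k d 0 k = 1 -> (forall k, conjc (d 0 k) * d 0 k = 1) -> in_SU (diag_mx d).
Proof.
move=> hdet hunit; split; first by rewrite det_diag.
rewrite Iform_diag cadj_diag !mulmx_diag; congr diag_mx; apply/rowP => k.
by rewrite !mxE mulrAC hunit mul1r.
Qed.

Definition diag3 m (a b c : C) : 'M[C]_m.+1 :=
  diag_mx (\row_k if k == ord_max then c
                  else if val k == 0%N then a else if val k == 1%N then b else 1).

Lemma diag3_in_SU m (a b c : C) : (2 <= m)%N -> a * b * c = 1 ->
  conjc a * a = 1 -> conjc b * b = 1 -> conjc c * c = 1 -> in_SU (diag3 m a b c).
Proof.
move=> hm habc ha hb hc; apply: diag_in_SU => [|k]; last first.
  by rewrite mxE; do !case: ifP => _ //; rewrite rmorph1 mulr1.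
have lt1m : (1 < m.+1)%N by lia.
have max_neq (k : 'I_m.+1) : (val k < 2)%N -> k != ord_max.
  by move=> hk; rewrite -val_eqE /= neq_ltn (leq_trans hk hm).
rewrite (bigD1 ord0) // (bigD1 (Ordinal lt1m)) // (bigD1 ord_max) /=; last first.
  by rewrite !(eq_sym ord_max) !max_neq.
rewrite big1 => [|k /andP [/andP [k0 k1] kmax]]; last first.
  by move: k0 k1; rewrite mxE (negbTE kmax) -!val_eqE /= => /negbTE -> /negbTE ->.
by rewrite !mxE eqxx !ifN ?max_neq // mulr1 mulrA.
Qed.

Lemma conjcN_mul (x : C) : conjc (- x) * - x = conjc x * x.
Proof. by rewrite rmorphN mulrNN. Qed.

Lemma conjc_i_mul : conjc 'i * 'i = 1 :> C.
Proof. by apply/eqP; rewrite eq_complex /=; apply/andP; split; apply/eqP; ring. Qed.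

Lemma conjc1_mul : conjc 1 * 1 = 1 :> C.
Proof. by rewrite rmorph1 mulr1. Qed.

Lemma signed_diag3_in_SU m : (2 <= m)%N ->
  [/\ in_SU (diag3 m (-1) 'i 'i), in_SU (diag3 m (-1) (-'i) (-'i)),
      in_SU (diag3 m 1 'i (-'i)) & in_SU (diag3 m 1 (-'i) 'i)].
Proof.
have i2 : 'i * 'i = -1 :> C by rewrite -expr2 sqr_i.
move=> hm; split; apply: diag3_in_SU => //;
  by rewrite ?conjcN_mul ?conjc_i_mul ?conjc1_mul ?(mul1r, mulNr, mulrN, i2, opprK).
Qed.

Lemma diag3_signed_sum m :
  (diag3 m (-1) 'i 'i - diag3 m (-1) (-'i) (-'i))
  - (diag3 m 1 'i (-'i) - diag3 m 1 (-'i) 'i) = corner m ('i *+ 4).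
Proof.
apply/matrixP => a b; rewrite !mxE.
case: (eqVneq a b) => [<-|nab].
  by rewrite !mulr1n andbb; do !case: ifP => _; ring.
rewrite !mulr0n !subrr; case: ifP => // /andP [/eqP ha /eqP hb].
by case/eqP: nab; rewrite ha hb.
Qed.
End SpecialUnitary.

Section QuaternionicEmbedding.
Variable R : rcfType.

Lemma c2q_is_zmod_morphism : zmod_morphism (@c2q R).
Proof. by case=> ? ? [] ? ?; congr Quat; rewrite /= subrr. Qed.
HB.instance Definition _ :=
  GRing.isZmodMorphism.Build R[i] (quat R) (@c2q R) c2q_is_zmod_morphism.

Definition qembed n m (B : 'M[R[i]]_m.+1) : 'M[quat R]_n.+1 :=
  \matrix_(i, j) if (i < n - m)%N || (j < n - m)%N then 0
                 else c2q (B (inord (i - (n - m))) (inord (j - (n - m)))).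

Lemma blockI_sub n m (B1 B2 : 'M[R[i]]_m.+1) :
  blockI n B1 - blockI n B2 = qembed n (B1 - B2).
Proof.
apply/matrixP => i j; rewrite !mxE.
by case: ifP => _; [rewrite subrr | case: ifP => _; rewrite ?subrr // raddfB].
Qed.

Lemma qembedB n m (B1 B2 : 'M[R[i]]_m.+1) :
  qembed n (B1 - B2) = qembed n B1 - qembed n B2.
Proof. by apply/matrixP => i j; rewrite !mxE; case: ifP; rewrite ?subrr // raddfB. Qed.

Lemma inord_shift_eq_max n m (i : 'I_n.+1) : (m <= n)%N -> (n - m <= i)%N ->
  ((inord (i - (n - m)) : 'I_m.+1) == ord_max) = (i == ord_max).
Proof.
move=> hmn hi; have lt_in := ltn_ord i.
rewrite -!val_eqE /= inordK; last by lia.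
by apply/eqP/eqP; lia.
Qed.

Lemma qembed_corner n m (w : R[i]) : (m <= n)%N ->
  qembed n (corner m w) = corner n (c2q w).
Proof.
move=> hmn; apply/matrixP => i j; rewrite !mxE.
case: ifP => [hij | /norP [hi hj]].
  case: ifP => // /andP [/eqP hi /eqP hj].
  by move: hij; rewrite hi hj /= ltnNge leq_subr.
rewrite -!leqNgt in hi hj.
by rewrite !inord_shift_eq_max //; case: ifP.
Qed.

End QuaternionicEmbedding.


Lemma qreal_mxtrace_sandwichB (R : comNzRingType) n (g gi A B : 'M[quat R]_n) :
  qreal (\tr (g *m A *m gi)) -> qreal (\tr (g *m B *m gi)) ->
  qreal (\tr (g *m (A - B) *m gi)).
Proof. by rewrite mulmxBr mulmxBl raddfB; apply: qrealB. Qed.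

Section Symplectic.
Variable R : comNzRingType.
Variable n : nat.
Implicit Types g gi : 'M[quat R]_n.+1.
Notation I := (Iform (quat R) n).

Lemma Sp_inverse g gi : in_Sp g -> g *m gi = 1%:M -> gi = I *m qadj g *m I.
Proof.
move=> [_ hS] hg.
have hl : (I *m qadj g *m I) *m g = 1%:M.
  by rewrite -!mulmxA (mulmxA (qadj g)) hS Iform_mul_self.
by rewrite -[gi]mul1mx -hl -(mulmxA _ g gi) hg mulmx1.
Qed.

Lemma Sp_last_column g : in_Sp g -> \sum_k qconj (g k ord_max) * sgn k * g k ord_max = -1.
Proof.
move=> [_ hS]; have := congr1 (fun M : 'M_n.+1 => M ord_max ord_max) hS.
rewrite /= [RHS]mxE eqxx mxE => <-.
by apply: eq_bigr => k _; rewrite Iform_diag mul_mx_diag !mxE.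
Qed.

Lemma Sp_conj_corner_trace g gi (y : quat R) : in_Sp g -> g *m gi = 1%:M ->
  \tr (g *m corner n y *m gi) = - \sum_k g k ord_max * y * qconj (g k ord_max) * sgn k.
Proof.
move=> hg hggi; rewrite mxtrace_mul_corner (Sp_inverse hg hggi) -sumrN.
apply: eq_bigr => k _.
by rewrite Iform_diag mul_mx_diag mxE mul_diag_mx !mxE sgn_max mulN1r mulNr mulrN !mulrA.
Qed.

End Symplectic.

Theorem corollary4p13 (R : realType) (n m : nat) :
  (2 <= m)%N -> (m <= n)%N ->
  forall H : 'M[quat R]_(n.+1) -> Prop,
    (exists g gi : 'M[quat R]_(n.+1),
        in_Sp g /\ g *m gi = 1%:M /\ gi *m g = 1%:M /\
        (forall A, H A <-> exists B : 'M[R[i]]_(m.+1),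
                              in_SU B /\ A = g *m blockI n B *m gi)) ->
    ~ (forall A, H A -> qreal (\tr A)).
Proof.
move=> hm hmn H [g [gi [hg [hggi [_ hH]]]]] hreal.
have tr_real (B : 'M[R[i]]_m.+1) : in_SU B -> qreal (\tr (g *m blockI n B *m gi)).
  by move=> hB; apply/hreal/hH; exists B.
have [SU1 SU2 SU3 SU4] := signed_diag3_in_SU R hm.
have : qreal (\tr (g *m corner n (qi R *+ 4) *m gi)).
  have -> : qi R *+ 4 = c2q ('i *+ 4) by rewrite raddfMn.
  rewrite -(qembed_corner _ hmn) -diag3_signed_sum.
  rewrite qembedB -!blockI_sub.
  by apply: qreal_mxtrace_sandwichB; apply: qreal_mxtrace_sandwichB; apply: tr_real.
rewrite Sp_conj_corner_trace // => /qrealN; rewrite opprK.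
rewrite (eq_bigr (fun k => (hopf (g k ord_max) * sgn k) *+ 4)) => [|k _]; last first.
  by rewrite /hopf mulrnAr !mulrnAl.
rewrite sumrMnl => /qreal_mulrnK.
exact/hopf_signed_sum_not_real/Sp_last_column.
Qed.
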